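(* Let $X$ be a linearly ordered set. A linear basis of the free $\mathrm{BiCom}$-algebra $\mathrm{BiCom}\langle X\rangle$ consists of the words $x_1*\dots*x_t*(y_1\odot\dots\odot y_k)$, with $t\ge 0$, $k\ge 1$, $x_i,y_j\in X$, and $x_1\le\dots\le x_t\le y_1\le\dots\le y_k$ (for $t=0$ the word is $y_1\odot\dots\odot y_k$; bracketings inside $*$-products and $\odot$-products are irrelevant by associativity).
   Context: A $\mathrm{BiCom}$-algebra is a vector space with two bilinear operations $*$ and $\odot$, each associative and commutative, satisfying $(x\odot y)*z=x\odot(y*z)$. *)

From HB Require Import structures.
From mathcomp Require Import all_boot all_order all_algebra.
Set Implicit Arguments. Unset Strict Implicit. Unset Printing Implicit Defensive.
Import Order.TTheory GRing.Theory Num.Theory.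
Local Open Scope ring_scope.

Record bicom (K : fieldType) (A : lmodType K) := BiCom {
  bstar : A -> A -> A;
  bodot : A -> A -> A;
  bstar_linl : forall (a : K) (x y z : A), bstar (a *: x + y) z = a *: bstar x z + bstar y z;
  bstar_linr : forall (a : K) (x y z : A), bstar z (a *: x + y) = a *: bstar z x + bstar z y;
  bodot_linl : forall (a : K) (x y z : A), bodot (a *: x + y) z = a *: bodot x z + bodot y z;
  bodot_linr : forall (a : K) (x y z : A), bodot z (a *: x + y) = a *: bodot z x + bodot z y;
  bstarA : forall x y z : A, bstar (bstar x y) z = bstar x (bstar y z);
  bstarC : forall x y : A, bstar x y = bstar y x;
  bodotA : forall x y z : A, bodot (bodot x y) z = bodot x (bodot y z);
  bodotC : forall x y : A, bodot x y = bodot y x;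
  bmixed : forall x y z : A, bstar (bodot x y) z = bodot x (bstar y z)
}.

Inductive bterm (X : Type) : Type :=
| BVar of X
| BStar of bterm X & bterm X
| BOdot of bterm X & bterm X.

Fixpoint beval (K : fieldType) (A : lmodType K) (B : bicom A) (X : Type)
    (f : X -> A) (t : bterm X) : A :=
  match t with
  | BVar x => f x
  | BStar u v => bstar B (beval B f u) (beval B f v)
  | BOdot u v => bodot B (beval B f u) (beval B f v)
  end.

Fixpoint odot_word (X : Type) (y : X) (ys : seq X) : bterm X :=
  match ys with
  | [::] => BVar y
  | y' :: ys' => BOdot (BVar y) (odot_word y' ys')
  end.

(* x_1 * ... * x_t * (y_1 odot ... odot y_k). A basis word is indexed by the
   triple (xs, y, ys) with ys the tail of the odot-part. *)
Definition basis_word (X : Type) (w : seq X * X * seq X) : bterm X :=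
  foldr (fun x t => BStar (BVar x) t) (odot_word w.1.2 w.2) w.1.1.

Definition basis_ok (d : Order.disp_t) (X : orderType d) (w : seq X * X * seq X) : bool :=
  sorted (fun a b : X => (a <= b)%O) (w.1.1 ++ w.1.2 :: w.2).

Definition beval_comb (K : fieldType) (A : lmodType K) (B : bicom A)
    (d : Order.disp_t) (X : orderType d) (f : X -> A)
    (c : seq (K * (seq X * X * seq X))) : A :=
  \sum_(p <- c) p.1 *: beval B f (basis_word p.2).

From HB Require Import structures.
From mathcomp Require Import all_boot all_order all_algebra.
From mathcomp Require Import mpoly ring zify.
Set Implicit Arguments. Unset Strict Implicit. Unset Printing Implicit Defensive.
Import Order.TTheory GRing.Theory.
Local Open Scope ring_scope.

(* In any BiCom-algebra a word in the generators is determined by the multiset of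
   its letters and by the number of its star-products: besides associativity and
   commutativity of each operation, the mixed law gives a ⊙ (b * z) = a * (b ⊙ z),
   so a letter may move between the star-part and the odot-part of a word.  Sorting
   the letters yields the spanning set.  For independence, evaluate in K[x_a, z]
   with a * b = ab and a ⊙ b = zab: a basis word with k odot-letters becomes the
   monomial z^(k-1) prod x_a, and distinct sorted words give distinct monomials. *)

Section BiComIdentities.

Variables (K : fieldType) (A : lmodType K) (B : bicom A).
Local Notation "x ⋆ y" := (bstar B x y) (at level 40, left associativity).
Local Notation "x ⊙ y" := (bodot B x y) (at level 40, left associativity).

Lemma bstarCA (a b z : A) : a ⋆ (b ⋆ z) = b ⋆ (a ⋆ z).
Proof. by rewrite -!bstarA (bstarC B a b). Qed.

Lemma bodotCA (a b z : A) : a ⊙ (b ⊙ z) = b ⊙ (a ⊙ z).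
Proof. by rewrite -!bodotA (bodotC B a b). Qed.

Lemma bodot_bstarCA (a b z : A) : a ⊙ (b ⋆ z) = b ⋆ (a ⊙ z).
Proof. by rewrite (bstarC B b) -bmixed bstarC. Qed.

Lemma bodot_bstar_exchange (a b z : A) : a ⊙ (b ⋆ z) = b ⊙ (a ⋆ z).
Proof. by rewrite -!bmixed (bodotC B a b). Qed.

Lemma bstar_bodotCA (a b z : A) : a ⋆ (b ⊙ z) = b ⋆ (a ⊙ z).
Proof. by rewrite -!bodot_bstarCA bodot_bstar_exchange. Qed.

Lemma bodot_bstarA (a b c : A) : (a ⋆ b) ⊙ c = a ⋆ (b ⊙ c).
Proof. by rewrite bodotC (bstarC B a) -bmixed bstarC bodotC. Qed.

End BiComIdentities.

Section NormalValue.

Variables (K : fieldType) (A : lmodType K) (B : bicom A) (X : Type) (f : X -> A).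
Local Notation "x ⋆ y" := (bstar B x y) (at level 40, left associativity).
Local Notation "x ⊙ y" := (bodot B x y) (at level 40, left associativity).

(* [nf_val i T] is the value of the basis word with letters [T] whose first [i]
   letters are star-factors; [i] is effectively capped at [size T - 1], and the
   empty word gets the junk value [0]. *)
Fixpoint nf_val (i : nat) (T : seq X) : A :=
  match T with
  | [::] => 0
  | a :: T' =>
    if T' is [::] then f a else
    if i is i'.+1 then f a ⋆ nf_val i' T' else f a ⊙ nf_val 0 T'
  end.
#[global] Arguments nf_val i T : simpl nomatch.

Lemma nf_val_shift (a : A) i T :
  (i.+1 < size T)%N -> a ⊙ nf_val i.+1 T = a ⋆ nf_val i T.
Proof.
elim: T i => [|b [|c T] IH] [|i] //= lt_iT.
- by rewrite bodot_bstarCA bstar_bodotCA.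
- by rewrite bodot_bstarCA IH // bstarCA.
Qed.

Lemma nf_val_odot_cons a i T :
  (i < size T)%N -> f a ⊙ nf_val i T = nf_val i (a :: T).
Proof. by case: T => // b T; case: i => [|i] //= lt_iT; rewrite nf_val_shift. Qed.

Lemma nf_val_star_cons a i T :
  (0 < size T)%N -> f a ⋆ nf_val i T = nf_val i.+1 (a :: T).
Proof. by case: T. Qed.

Lemma nf_val_cat_star i1 i2 T1 T2 : (i1 < size T1)%N -> (i2 < size T2)%N ->
  nf_val i1 T1 ⋆ nf_val i2 T2 = nf_val (i1 + i2).+1 (T1 ++ T2).
Proof.
case: T2 => // c T2; rewrite [size (c :: _)]/= ltnS => + le_i2.
elim: T1 i1 => [|a [|b T1] IH] [|i1] //= lt_i1.
- by rewrite bmixed IH // nf_val_shift // size_cat /=; lia.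
- by rewrite bstarA IH.
Qed.

Lemma nf_val_cat_odot i1 i2 T1 T2 : (i1 < size T1)%N -> (i2 < size T2)%N ->
  nf_val i1 T1 ⊙ nf_val i2 T2 = nf_val (i1 + i2) (T1 ++ T2).
Proof.
move=> + lt_i2; elim: T1 i1 => [|a [|b T1] IH] [|i1] //= lt_i1.
- exact: nf_val_odot_cons.
- by rewrite bodotA IH // nf_val_odot_cons // size_cat ltn_addl.
- by rewrite bodot_bstarA IH.
Qed.

Lemma nf_val_swap a b T : nf_val^~ (a :: b :: T) =1 nf_val^~ (b :: a :: T).
Proof.
case: T => [|c T] [|[|i]] /=.
- exact: bodotC.
- exact: bstarC.
- exact: bstarC.
- exact: bodotCA.
- exact: bstar_bodotCA.
- exact: bstarCA.
Qed.

Lemma nf_val_cons_eq a T T' : size T = size T' ->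
  nf_val^~ T =1 nf_val^~ T' -> nf_val^~ (a :: T) =1 nf_val^~ (a :: T').
Proof. by case: T T' => [|b T] [|b' T'] // _ eqTT' [|i] /=; rewrite eqTT'. Qed.

End NormalValue.

Section NormalValuePerm.

Variables (K : fieldType) (A : lmodType K) (B : bicom A) (X : eqType) (f : X -> A).

Lemma nf_val_catCA (s1 s2 s3 : seq X) :
  nf_val B f ^~ (s1 ++ s2 ++ s3) =1 nf_val B f ^~ (s2 ++ s1 ++ s3).
Proof.
have nf_val_move a s U : nf_val B f ^~ (a :: s ++ U) =1 nf_val B f ^~ (s ++ a :: U).
  elim: s => [//|b s IH] i; rewrite nf_val_swap.
  by apply: (nf_val_cons_eq _ _ IH); rewrite /= !size_cat addnS.
elim: s1 => [//|a s1 IH] i; rewrite -nf_val_move.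
by apply: (nf_val_cons_eq _ _ IH); rewrite !size_cat addnCA.
Qed.

Lemma nf_val_perm (T T' : seq X) : perm_eq T T' -> nf_val B f ^~ T =1 nf_val B f ^~ T'.
Proof.
move=> /(catCA_perm_ind (P := fun U => nf_val B f ^~ T =1 nf_val B f ^~ U)); apply=> //.
by move=> s1 s2 s3 eqT i; rewrite eqT nf_val_catCA.
Qed.

End NormalValuePerm.

Fixpoint leaves (X : Type) (t : bterm X) : seq X :=
  match t with
  | BVar x => [:: x]
  | BStar u v | BOdot u v => leaves u ++ leaves v
  end.

Fixpoint stars (X : Type) (t : bterm X) : nat :=
  match t with
  | BVar _ => 0
  | BStar u v => (stars u + stars v).+1
  | BOdot u v => stars u + stars v
  end.

Lemma stars_lt_size_leaves (X : Type) (t : bterm X) : (stars t < size (leaves t))%N.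
Proof. by elim: t => [//|u + v|u + v] /=; rewrite size_cat; lia. Qed.

Lemma beval_nf_val (K : fieldType) (A : lmodType K) (B : bicom A) (X : Type) (f : X -> A)
    (t : bterm X) :
  beval B f t = nf_val B f (stars t) (leaves t).
Proof.
elim: t => [//|u IHu v IHv|u IHu v IHv] /=; rewrite IHu IHv.
- by rewrite nf_val_cat_star ?stars_lt_size_leaves.
- by rewrite nf_val_cat_odot ?stars_lt_size_leaves.
Qed.

Definition letters (X : Type) (w : seq X * X * seq X) : seq X := w.1.1 ++ w.1.2 :: w.2.

Definition split_word (X : Type) (x0 : X) (i : nat) (T : seq X) : seq X * X * seq X :=
  (take i T, nth x0 T i, drop i.+1 T).

Lemma letters_split_word (X : Type) (x0 : X) i T :
  (i < size T)%N -> letters (split_word x0 i T) = T.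
Proof. by move=> lt_iT; rewrite /letters /= -drop_nth // cat_take_drop. Qed.

Lemma beval_basis_word (K : fieldType) (A : lmodType K) (B : bicom A) (X : Type)
    (f : X -> A) (w : seq X * X * seq X) :
  beval B f (basis_word w) = nf_val B f (size w.1.1) (letters w).
Proof.
case: w => [[xs y] ys]; rewrite /basis_word /letters /=.
elim: xs => [|x xs IH] /=.
  by elim: ys y => [//|y' ys IH] y /=; rewrite IH.
by rewrite IH nf_val_star_cons // size_cat addnS.
Qed.

Lemma bterm_span (K : fieldType) (d : Order.disp_t) (X : orderType d) (t : bterm X) :
  exists c : seq (K * (seq X * X * seq X)),
    all (@basis_ok d X) (map snd c) /\
    forall (A : lmodType K) (B : bicom A) (f : X -> A), beval B f t = beval_comb B f c.
Proof.
have perm_leaves := permEl (perm_sort <=%O (leaves t)).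
have := stars_lt_size_leaves t; rewrite -(perm_size perm_leaves).
case Esort: (sort _ _) perm_leaves => [//|x0 T] perm_leaves lt_sT.
pose w := split_word x0 (stars t) (x0 :: T).
have letters_w : letters w = x0 :: T by apply: letters_split_word.
exists [:: (1, w)]; split.
  by rewrite /= andbT /basis_ok -[_ ++ _]/(letters w) letters_w -Esort sort_sorted.
move=> A B f; rewrite /beval_comb big_seq1 scale1r beval_basis_word letters_w.
by rewrite size_takel 1?ltnW // beval_nf_val (nf_val_perm _ _ perm_leaves).
Qed.

Section ScaledBiCom.

Variables (K : fieldType) (R : comAlgType K) (z : R).

Definition scaled_bicom : bicom R.
Proof.
refine (@BiCom K R *%R (fun p q => z * (p * q)) _ _ _ _ _ _ _ _ _).
- by move=> a x y w; rewrite mulrDl -scalerAl.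
- by move=> a x y w; rewrite mulrDr -scalerAr.
- by move=> a x y w; rewrite mulrDl mulrDr -scalerAl -scalerAr.
- by move=> a x y w; rewrite !mulrDr -!scalerAr.
- by move=> x y w; rewrite mulrA.
- exact: mulrC.
- by move=> x y w; ring.
- by move=> x y; rewrite [x * y]mulrC.
- by move=> x y w; ring.
Defined.

Lemma nf_val_scaled_bicom (X : Type) (f : X -> R) i T : (0 < size T)%N ->
  nf_val scaled_bicom f i T = z ^+ ((size T).-1 - i) * \prod_(b <- T) f b.
Proof.
case: T => // a T _; elim: T i a => [|b T IH] [|i] a;
  rewrite big_cons ?big_nil ?mulr1 ?expr0 ?mul1r //=.
  by rewrite IH subn0 exprS; ring.
by rewrite IH subSS; ring.
Qed.

End ScaledBiCom.

Section MonomialModel.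

Variables (d : Order.disp_t) (X : orderType d) (s : seq X).

(* The letters of [s] become the first [size s] variables; [ord_max] plays z. *)
Definition letter_var (a : X) : 'I_(size s).+1 := inord (index a s).

Lemma val_letter_var a : a \in s -> letter_var a = index a s :> nat.
Proof. by move=> sa; rewrite inordK // ltnS ltnW // index_mem. Qed.

Lemma letter_var_max a : a \in s -> (letter_var a == ord_max) = false.
Proof.
by move=> sa; apply/negbTE; rewrite -val_eqE /= val_letter_var // neq_ltn index_mem sa.
Qed.

Lemma letter_var_eq a b : a \in s -> b \in s -> (letter_var a == letter_var b) = (a == b).
Proof.
move=> sa sb; rewrite -val_eqE /= !val_letter_var //.
by apply/eqP/eqP => [eq_ab|-> //]; rewrite -(nth_index a sa) eq_ab nth_index.
Qed.

Definition word_mnm (w : seq X * X * seq X) : 'X_{1..(size s).+1} :=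
  (U_(ord_max) *+ size w.2 + \sum_(a <- letters w) U_(letter_var a))%MM.

Lemma word_mnm_max w : {subset letters w <= s} -> word_mnm w ord_max = size w.2.
Proof.
move=> sub_ws; rewrite mnmDE mulmnE mnm1E eqxx mul1n mnm_sumE big1_seq ?addn0 //.
by move=> a /andP[_ wa]; rewrite mnm1E letter_var_max // sub_ws.
Qed.

Lemma word_mnm_letter w x : {subset letters w <= s} -> x \in s ->
  word_mnm w (letter_var x) = count_mem x (letters w).
Proof.
move=> sub_ws sx; rewrite mnmDE mulmnE mnm1E eq_sym letter_var_max // mul0n add0n.
rewrite mnm_sumE -sum1_count [RHS]big_mkcond; apply: eq_big_seq => a wa.
by rewrite mnm1E letter_var_eq // sub_ws.
Qed.

Lemma letters_inj (w1 w2 : seq X * X * seq X) :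
  letters w1 = letters w2 -> size w1.2 = size w2.2 -> w1 = w2.
Proof.
case: w1 w2 => [[xs1 y1] ys1] [[xs2 y2] ys2]; rewrite /letters /= => eq_l eq_ys.
have eq_xs : size xs1 = size xs2.
  by move: (congr1 size eq_l); rewrite !size_cat /= eq_ys => /addIn.
by move/eqP: eq_l; rewrite eqseq_cat // => /andP[/eqP-> /eqP[-> ->]].
Qed.

Lemma word_mnm_inj w1 w2 : basis_ok w1 -> basis_ok w2 ->
  {subset letters w1 <= s} -> {subset letters w2 <= s} ->
  word_mnm w1 = word_mnm w2 -> w1 = w2.
Proof.
move=> ok1 ok2 sub1 sub2 eq_w; apply: letters_inj; last first.
  by rewrite -word_mnm_max // eq_w word_mnm_max.
apply: (sorted_eq le_trans le_anti) ok1 ok2 _; apply/allP => x.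
rewrite mem_cat => /orP[/sub1|/sub2] sx; apply/eqP.
  by rewrite -!word_mnm_letter // eq_w.
by rewrite -!word_mnm_letter // eq_w.
Qed.

Lemma beval_basis_word_mpoly (K : fieldType) w :
  beval (scaled_bicom 'X_ord_max) (fun a => 'X_(letter_var a)) (basis_word w)
  = 'X_[word_mnm w] :> {mpoly K[(size s).+1]}.
Proof.
rewrite beval_basis_word nf_val_scaled_bicom /letters ?size_cat ?addnS //= addKn.
by rewrite mpolyXD mpolyXn (big_morph _ (@mpolyXD _ _) (mpolyX0 _ _)).
Qed.

End MonomialModel.

Lemma sum_coef_at_key (R : nzSemiRingType) (T : eqType) (c : seq (R * T)) q :
  uniq (map snd c) -> q \in c -> \sum_(p <- c) p.1 * (p.2 == q.2)%:R = q.1.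
Proof.
elim: c => [//|p c IH] /= /andP[p2_notin uniq_c]; rewrite inE big_cons.
case/orP=> [/eqP->|qc]; last first.
  rewrite IH //; case: eqP => [eq_pq|_]; last by rewrite mulr0 add0r.
  by move: p2_notin; rewrite eq_pq map_f.
rewrite eqxx mulr1 big1_seq ?addr0 // => p' /andP[_ p'c].
case: eqP => [eq_p'p|_]; last by rewrite mulr0.
by move: p2_notin; rewrite -eq_p'p map_f.
Qed.

Lemma basis_words_free (K : fieldType) (d : Order.disp_t) (X : orderType d)
    (c : seq (K * (seq X * X * seq X))) :
  uniq (map snd c) -> all (@basis_ok d X) (map snd c) ->
  (forall (A : lmodType K) (B : bicom A) (f : X -> A), beval_comb B f c = 0) ->
  all (fun p => p.1 == 0) c.
Proof.
move=> uniq_c /allP ok_c eval0; pose s := flatten [seq letters p.2 | p <- c].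
have sub_s p : p \in c -> {subset letters p.2 <= s}.
  move=> pc x xp; apply/flattenP; exists (letters p.2) => //.
  by apply: (map_f (fun p => letters p.2)).
have ok p : p \in c -> basis_ok p.2 by move=> pc; rewrite ok_c ?map_f.
have := eval0 _ (scaled_bicom 'X_ord_max) (fun a => 'X_(letter_var s a)).
rewrite /beval_comb; under eq_bigr do rewrite beval_basis_word_mpoly.
move=> sum0; apply/allP => q qc; apply/eqP.
rewrite -(sum_coef_at_key uniq_c qc) -[RHS](mcoeff0 K (word_mnm s q.2)) -sum0 raddf_sum.
apply: eq_big_seq => p pc /=; rewrite mcoeffZ mcoeffX; congr (_ * (nat_of_bool _)%:R).
apply/eqP/eqP => [-> //|]; apply: word_mnm_inj; by [apply: ok | apply: sub_s].
Qed.

Theorem mainTheorem3 (K : fieldType) (d : Order.disp_t) (X : orderType d) :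
  (* spanning: every element of the free BiCom-algebra is a combination of basis words *)
  (forall t : bterm X, exists c : seq (K * (seq X * X * seq X)),
      all (@basis_ok d X) (map snd c) /\
      forall (A : lmodType K) (B : bicom A) (f : X -> A),
        beval B f t = beval_comb B f c)
  /\
  (* linear independence in the free BiCom-algebra *)
  (forall c : seq (K * (seq X * X * seq X)),
      uniq (map snd c) -> all (@basis_ok d X) (map snd c) ->
      (forall (A : lmodType K) (B : bicom A) (f : X -> A), beval_comb B f c = 0) ->
      all (fun p => p.1 == 0) c).
Proof. by split; [exact: bterm_span | exact: basis_words_free]. Qed.
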